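(* Let $c\ge 1$ be an integer. The $c$-indistinguishable finite bias distributions are in one-to-one correspondence with the symmetric quadrature systems of degree $c-1$, via the following mutually inverse maps. (i) For a symmetric quadrature system $\mathcal{Q}=(X,\omega)$ of degree $c-1$, let $\mathcal{P}(\mathcal{Q})$ be the distribution that takes the value $\frac{1+\xi}{2}$ with probability $\frac{\omega(\xi)}{C\sqrt{1-\xi^2}}$ for each $\xi\in X$, where $C=\sum_{\xi\in X}\omega(\xi)/\sqrt{1-\xi^2}$. (ii) For a $c$-indistinguishable finite bias distribution $\mathcal{P}$ taking the values $p_1,\dots,p_k$ with probabilities $q_1,\dots,q_k$ respectively, let $\mathcal{Q}(\mathcal{P})=(\{\xi_1,\dots,\xi_k\},\omega)$ with $\xi_i=2p_i-1$ and $\omega(\xi_i)=\sqrt{p_i(1-p_i)}\,q_i/C'$, where $C'=\sum_{i=1}^k\sqrt{p_i(1-p_i)}\,q_i/2$. Then $\mathcal{P}(\mathcal{Q})$ is a $c$-indistinguishable finite bias distribution, $\mathcal{Q}(\mathcal{P})$ is a symmetric quadrature system of degree $c-1$, $\mathcal{Q}(\mathcal{P}(\mathcal{Q}))=\mathcal{Q}$ and $\mathcal{P}(\mathcal{Q}(\mathcal{P}))=\mathcal{P}$.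
   Context: A finite bias distribution is a probability distribution $\mathcal{P}$ supported on a finite subset of the open interval $(0,1)$ that is symmetric: for every $a$, $\mathcal{P}$ outputs $a$ and $1-a$ with the same probability. $E_p$ denotes expectation over $p$ drawn from $\mathcal{P}$. For $0<p<1$ put $\sigma(p)=\sqrt{(1-p)/p}$, and for integers $\ell\ge 1$, $0\le x\le\ell$ put $f_{\ell,x}(p)=p^x(1-p)^{\ell-x}\bigl(x\sigma(p)-(\ell-x)\sigma(1-p)\bigr)$ and $R_{\ell,x}=\max\{0,E_p[f_{\ell,x}(p)]\}$. For a positive integer $c$, $\mathcal{P}$ is called $c$-indistinguishable if $\sum_{x=1}^{\ell-1}\binom{\ell}{x}R_{\ell,x}=0$ for all $2\le\ell\le c$. A quadrature system (QS) of degree $d$ is a pair $(X,\omega)$ where $X$ is a finite subset of $(-1,1)$ and $\omega:X\to(0,\infty)$, such that $\int_{-1}^1F(t)\,dt=\sum_{\xi\in X}\omega(\xi)F(\xi)$ for every real polynomial $F$ of degree at most $d$. Its order is $|X|$. It is symmetric if $-X=X$ and $\omega(-\xi)=\omega(\xi)$ for all $\xi\in X$. *)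

From HB Require Import structures.
From mathcomp Require Import all_boot all_order all_algebra.
From mathcomp Require Import all_classical all_reals all_analysis.
Set Implicit Arguments. Unset Strict Implicit. Unset Printing Implicit Defensive.
Import Order.TTheory GRing.Theory Num.Theory.
Local Open Scope classical_set_scope.
Local Open Scope ring_scope.

Section Defs.
Variable R : realType.

Definition supp (w : R -> R) : set R := [set x | w x != 0].

(* Finite bias distribution, encoded by its probability mass function P:
   P x is the probability of outputting x (0 outside the support). *)
Definition bias_dist (P : R -> R) : Prop :=
  finite_set (supp P) /\
  (forall x, 0 <= P x) /\
  (forall x, P x != 0 -> 0 < x < 1) /\
  (\sum_(x \in supp P) P x = 1) /\
  (forall a, P (1 - a) = P a).

Definition Ep (P : R -> R) (f : R -> R) : R := \sum_(x \in supp P) P x * f x.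

Definition sigma (p : R) : R := Num.sqrt ((1 - p) / p).

Definition fbias (l x : nat) (p : R) : R :=
  p ^+ x * (1 - p) ^+ (l - x) *
  (x%:R * sigma p - (l - x)%:R * sigma (1 - p)).

Definition Rlx (P : R -> R) (l x : nat) : R := Num.max 0 (Ep P (fbias l x)).

Definition c_indist (c : nat) (P : R -> R) : Prop :=
  bias_dist P /\
  forall l : nat, (2 <= l <= c)%N ->
    \sum_(1 <= x < l) ('C(l, x))%:R * Rlx P l x = 0.

(* Quadrature system encoded by its weight function omega : R -> R, with
   node set X = supp omega (omega is 0 outside X, positive on X). *)
Definition QS (d : nat) (w : R -> R) : Prop :=
  finite_set (supp w) /\
  (forall x, 0 <= w x) /\
  (forall x, w x != 0 -> -1 < x < 1) /\
  (forall F : {poly R}, (size F <= d.+1)%N ->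
     (\int[lebesgue_measure]_(t in `[(-1)%R, 1%R]) (F.[t])%:E)%E =
     (\sum_(xi \in supp w) w xi * F.[xi])%:E).

Definition symQS (d : nat) (w : R -> R) : Prop :=
  QS d w /\ forall xi, w (- xi) = w xi.

Definition PofQ (w : R -> R) : R -> R :=
  let C := \sum_(xi \in supp w) w xi / Num.sqrt (1 - xi ^+ 2) in
  fun p => let xi := 2 * p - 1 in w xi / (C * Num.sqrt (1 - xi ^+ 2)).

Definition QofP (P : R -> R) : R -> R :=
  let C' := \sum_(p \in supp P) Num.sqrt (p * (1 - p)) * P p / 2 in
  fun xi => let p := (1 + xi) / 2 in Num.sqrt (p * (1 - p)) * P p / C'.

End Defs.

(* With [B_{l,x}(p) = p^x (1 - p)^(l - x)] one has
   [f_{l,x}(p) = sqrt(p (1 - p)) B_{l,x}'(p)], so [E_p[f_{l,x}]] integrates the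
   polynomial [B_{l,x}'] of degree [< l] against the weights
   [P(p) sqrt(p (1 - p))]; under [xi = 2p - 1] these are, up to normalisation,
   the weights [omega] of the quadrature system.  If [omega] is exact in degree
   [< c], the sum is [B_{l,x}(1) - B_{l,x}(0) = 0] for [0 < x < l <= c].
   Conversely, the reflection [x -> l - x] negates [E_p[f_{l,x}]] for a
   symmetric [P], so all [R_{l,x}] vanish only if all [E_p[f_{l,x}]] vanish;
   for [x = l - 1] this says [(k + 1) m_k = (k + 2) m_(k+1)] for the weighted
   moments [m_k], i.e. [m_k = m_0 / (k + 1)], which are the moments of the
   uniform measure on [[0, 1]].  So the weights are exact in degree [< c]. *)

From HB Require Import structures.
From mathcomp Require Import all_boot all_order all_algebra.
From mathcomp Require Import all_classical all_reals all_analysis.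
From mathcomp Require Import ring lra.
Import Order.TTheory GRing.Theory Num.Theory.
Import numFieldNormedType.Exports.
Local Open Scope ring_scope.
Set Implicit Arguments. Unset Strict Implicit.

Section PolyIntegral.
Variable R : realType.
Implicit Types (F G K : {poly R}).

Definition int01 G : R := \sum_(i < size G) G`_i / i.+1%:R.

Lemma int01_wide n G : (size G <= n)%N -> int01 G = \sum_(i < n) G`_i / i.+1%:R.
Proof.
move=> sGn; rewrite /int01 -(subnKC sGn) big_split_ord /= [X in _ + X]big1 ?addr0 //.
by move=> i _; rewrite nth_default ?mul0r // leq_addr.
Qed.

Lemma int01_deriv K : int01 K^`() = K.[1] - K.[0].
Proof.
have sK' : (size K^`() <= size K)%N.
  by have [->|/lt_size_deriv/ltnW //] := eqVneq K 0; rewrite deriv0.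
rewrite (int01_wide sK') horner_coef0 (horner_coef_wide _ (leqnSn (size K))).
rewrite big_ord_recl /= expr0 mulr1 addrAC subrr add0r.
apply: eq_bigr => i _.
by rewrite coef_deriv expr1n mulr1 -[_ *+ i.+1]mulr_natr mulfK ?pnatr_eq0.
Qed.

Lemma int01C a : int01 a%:P = a.
Proof.
rewrite /int01 size_polyC; have [->|_] := eqVneq a 0; first by rewrite big_ord0.
by rewrite big_ord1 coefC divr1.
Qed.

Definition antideriv G : {poly R} :=
  \poly_(i < (size G).+1) (if i is j.+1 then G`_j / j.+1%:R else 0).

Lemma deriv_antideriv G : (antideriv G)^`() = G.
Proof.
apply/polyP => i; rewrite coef_deriv coef_poly ltnS.
case: ltnP => [_|sGi]; last by rewrite mul0rn nth_default.
by rewrite -[_ *+ i.+1]mulr_natr divfK // pnatr_eq0.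
Qed.

Lemma int01E G : int01 G = (antideriv G).[1] - (antideriv G).[0].
Proof. by rewrite -int01_deriv deriv_antideriv. Qed.

Definition to01 : {poly R} := 2^-1 *: ('X - (-1)%:P).
Definition to11 : {poly R} := 2 *: ('X - (2^-1)%:P).

Lemma to01E x : to01.[x] = (1 + x) / 2.
Proof. by rewrite /to01 hornerZ hornerXsubC; field. Qed.

Lemma to11E x : to11.[x] = 2 * x - 1.
Proof. by rewrite /to11 hornerZ hornerXsubC; field. Qed.

Lemma size_comp_to01 F : size (F \Po to01) = size F.
Proof.
by apply: size_comp_poly2; rewrite size_scale ?size_XsubC // invr_eq0 pnatr_eq0.
Qed.

Lemma size_comp_to11 F : size (F \Po to11) = size F.
Proof. by apply: size_comp_poly2; rewrite size_scale ?size_XsubC // pnatr_eq0. Qed.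

Lemma to11_to01 : to11 \Po to01 = 'X.
Proof.
rewrite /to11 linearZ /= comp_polyB comp_polyX comp_polyC /to01.
by apply/polyP => -[|[|i]]; rewrite !coefE /=; field.
Qed.

Lemma to01_to11 : to01 \Po to11 = 'X.
Proof.
rewrite /to01 linearZ /= comp_polyB comp_polyX comp_polyC /to11.
by apply/polyP => -[|[|i]]; rewrite !coefE /=; field.
Qed.

Lemma to01K : cancel (horner to01) (horner to11).
Proof. by move=> x; rewrite -horner_comp to11_to01 hornerX. Qed.

Lemma to11K : cancel (horner to11) (horner to01).
Proof. by move=> x; rewrite -horner_comp to01_to11 hornerX. Qed.

Lemma integral_deriv_poly K :
  (\int[lebesgue_measure]_(t in `[(-1)%R, 1%R]) (K^`().[t])%:E)%E =
  (K.[1] - K.[-1])%:E.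
Proof.
rewrite (@continuous_FTC2 _ _ (horner K)) ?EFinB //.
- by apply: continuous_subspaceT => x; exact: continuous_horner.
- split.
  + by move=> x _; exact: derivable_horner.
  + by apply: cvg_at_right_filter; exact: continuous_horner.
  + by apply: cvg_at_left_filter; exact: continuous_horner.
- by move=> x _; rewrite -derivE.
Qed.

Lemma integral_poly F :
  (\int[lebesgue_measure]_(t in `[(-1)%R, 1%R]) (F.[t])%:E)%E =
  (2 * int01 (F \Po to11))%:E.
Proof.
set G := F \Po to11.
have -> : F = (2 *: (antideriv G \Po to01))^`().
  rewrite derivZ deriv_comp deriv_antideriv -comp_polyA to11_to01 comp_polyXr.
  rewrite /to01 derivZ derivXsubC alg_polyC mulrC mul_polyC scalerA.
  by rewrite mulfV ?scale1r ?pnatr_eq0.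
rewrite (integral_deriv_poly (2 *: _)) !hornerZ !horner_comp !to01E int01E -mulrBr.
by congr (2 * (_.[_] - _.[_]))%:E; field.
Qed.

End PolyIntegral.
Arguments to01 {R}.
Arguments to11 {R}.

Section Sqrt.
Variable R : realType.

Lemma sqrtr_divr (a b : R) : 0 < b -> Num.sqrt (a / b) = Num.sqrt (a * b) / b.
Proof.
move=> b_gt0; have b_ge0 := ltW b_gt0.
have -> : a / b = b^-1 ^+ 2 * (a * b) by field; rewrite gt_eqF.
by rewrite sqrtrM ?exprn_ge0 ?invr_ge0 // sqrtr_sqr ger0_norm ?invr_ge0 // mulrC.
Qed.

Lemma sqrtr_one_sub_sqr (x : R) :
  Num.sqrt (1 - x ^+ 2) = 2 * Num.sqrt ((1 + x) / 2 * (1 - (1 + x) / 2)).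
Proof.
have -> : 1 - x ^+ 2 = 2 ^+ 2 * ((1 + x) / 2 * (1 - (1 + x) / 2)) by field.
by rewrite sqrtrM ?exprn_ge0 // sqrtr_sqr ger0_norm.
Qed.

End Sqrt.

Section Bernstein.
Variable R : realType.

Definition bern (l x : nat) : {poly R} := 'X^x * (1 - 'X) ^+ (l - x).

Lemma fbias_bern l x (p : R) : 0 < p < 1 ->
  fbias l x p = Num.sqrt (p * (1 - p)) * ((bern l x)^`()).[p].
Proof.
move=> /andP[p_gt0 p_lt1]; have q_gt0 : 0 < 1 - p by rewrite subr_gt0.
rewrite /fbias /sigma /bern derivM derivXn deriv_exp derivB derivX derivC.
rewrite (_ : 1 - (1 - p) = p) ?sqrtr_divr // 1?[(1 - p) * p]mulrC; last by ring.
rewrite !(hornerMn, hornerM, hornerXn, hornerN, hornerD, hornerC, hornerX, hornerE).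
set s := Num.sqrt _; set m := (l - x)%N.
by case: x m => [|x] [|m] /=; rewrite ?expr0 ?exprS ?mulr0n ?mulr1n; field;
  rewrite ?gt_eqF.
Qed.

Lemma size_bern l x : (x <= l)%N -> size (bern l x) = l.+1.
Proof.
move=> xl; have s1X : size (1 - 'X : {poly R}) = 2.
  by rewrite -opprB size_polyN -polyC1 size_XsubC.
have s1X_neq0 : 1 - 'X != 0 :> {poly R} by rewrite -size_poly_eq0 s1X.
have sexp : size ((1 - 'X : {poly R}) ^+ (l - x)) = (l - x).+1.
  rewrite -[LHS]prednK ?size_exp ?s1X ?mul1n // size_poly_gt0 expf_neq0 //.
rewrite /bern size_mul ?expf_neq0 ?polyX_eq0 // size_polyXn sexp.
by rewrite addSn addnS /= subnKC.
Qed.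

Lemma size_deriv_bern l x : (x <= l)%N -> (size (bern l x)^`() <= l)%N.
Proof. by move=> xl; rewrite (leq_trans (size_poly _ _)) // size_bern. Qed.

Lemma int01_deriv_bern l x : (0 < x < l)%N -> int01 (bern l x)^`() = 0.
Proof.
move=> /andP[x_gt0 xl]; rewrite int01_deriv /bern !hornerE subrr subr0 !expr0n.
by rewrite subn_eq0 leqNgt xl gtn_eqF // !mulr0 mul0r subrr.
Qed.

Lemma horner_deriv_bern_SS a (p : R) :
  ((bern a.+2 a.+1)^`()).[p] = a.+1%:R * p ^+ a - a.+2%:R * p ^+ a.+1.
Proof.
rewrite /bern subSS subSn // subnn expr1 derivM derivXn derivB derivX derivC.
rewrite !(hornerMn, hornerM, hornerXn, hornerN, hornerD, hornerC, hornerX, hornerE) /=.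
by rewrite -mulr_natl [a.+2%:R]mulrSr exprS; ring.
Qed.

Lemma fbias_reflect l x (p : R) : (x <= l)%N ->
  fbias l (l - x) (1 - p) = - fbias l x p.
Proof. by move=> xl; rewrite /fbias subKn // (_ : 1 - (1 - p) = p); ring. Qed.

End Bernstein.
Arguments bern {R}.

Local Open Scope classical_set_scope.

Section Supports.
Variable R : realType.
Implicit Types (u v h g F : R -> R) (A : set R).

Lemma supp_can u v h g : cancel h g -> cancel g h ->
  (forall x, (v (h x) == 0) = (u x == 0)) -> supp v = h @` supp u.
Proof.
move=> hK gK vh; apply/seteqP; split => [y vy|_ [x ux <-]]; last by rewrite /supp /= vh.
by exists (g y); rewrite /supp /= -?vh gK.
Qed.

Lemma fsbig_can A h g F : cancel h g ->
  \sum_(y \in h @` A) F y = \sum_(x \in A) F (h x).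
Proof. by move=> hK; apply: fsbig_image => x y _ _; exact: can_inj. Qed.

Lemma fsum_gt0 A F : finite_set A -> A !=set0 -> (forall x, A x -> 0 < F x) ->
  0 < \sum_(x \in A) F x.
Proof.
move=> finA [x Ax] F_gt0; rewrite (fsbigD1 x) //.
rewrite ltr_pwDl ?F_gt0 // fsumr_ge0 // => y [Ay _]; exact/ltW/F_gt0.
Qed.

Lemma fsum_neq0_nonempty A F : \sum_(x \in A) F x != 0 -> A !=set0.
Proof.
by move=> sum_neq0; apply/set0P; apply: contraNneq sum_neq0 => ->; rewrite fsbig_set0.
Qed.

End Supports.

Section Indistinguishability.
Variable R : realType.
Implicit Type P : R -> R.

Lemma Ep_fbias_reflect P l x : (forall a, P (1 - a) = P a) -> (x <= l)%N ->
  Ep P (fbias l (l - x)) = - Ep P (fbias l x).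
Proof.
move=> Psym xl; have reflK : involutive (fun p : R => 1 - p) by move=> p; ring.
have suppP : supp P = (fun p => 1 - p) @` supp P.
  by apply: (supp_can reflK reflK) => p; rewrite Psym.
rewrite /Ep {1}suppP (fsbig_can _ _ reflK) -mulN1r mulr_fsumr; apply: eq_fsbigr => p _.
by rewrite Psym fbias_reflect // mulrN mulN1r.
Qed.

Lemma Rlx_eq0 P l x : (Rlx P l x == 0) = (Ep P (fbias l x) <= 0).
Proof.
by rewrite /Rlx; case: leP => [_|E_gt0]; rewrite ?eqxx ?gt_eqF.
Qed.

Lemma c_indistP c P : c_indist c P <->
  bias_dist P /\ forall l x, (2 <= l <= c)%N -> (0 < x < l)%N -> Ep P (fbias l x) = 0.
Proof.
split=> [[biasP sumR0]|[biasP Ep0]]; split=> //; last first.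
  by move=> l hl; rewrite big_nat big1 // => x hx; rewrite /Rlx Ep0 // maxxx mulr0.
move=> l x hl hx.
have Ep_le0 y : (0 < y < l)%N -> Ep P (fbias l y) <= 0.
  move=> /andP[y_gt0 yl]; rewrite -Rlx_eq0.
  have /eqP := sumR0 l hl; rewrite big_nat psumr_eq0 => [/allP/(_ y)|z _].
    rewrite mem_index_iota y_gt0 yl mulf_eq0 pnatr_eq0 eqn0Ngt bin_gt0 (ltnW yl).
    by apply.
  by rewrite mulr_ge0 // le_max lexx.
have [x_gt0 xl] := andP hx; have Psym := biasP.2.2.2.2.
apply/eqP; rewrite eq_le Ep_le0 //= -oppr_le0 -(Ep_fbias_reflect Psym (ltnW xl)).
by rewrite Ep_le0 // subn_gt0 xl ltn_subrL x_gt0 (leq_trans x_gt0 (ltnW xl)).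
Qed.

End Indistinguishability.

Section UniformMoments.
Variables (R : realType) (s : seq R) (u : R -> R) (c : nat).
Hypothesis deriv_bern_orth : forall a, (a.+2 <= c)%N ->
  \sum_(p <- s) u p * ((bern a.+2 a.+1)^`()).[p] = 0.

Let m k := \sum_(p <- s) u p * p ^+ k.

Let moment_rec a : (a.+2 <= c)%N -> a.+1%:R * m a = a.+2%:R * m a.+1.
Proof.
move=> ac; apply/eqP; rewrite -subr_eq0 -(deriv_bern_orth ac) /m.
rewrite !mulr_sumr -sumrB; apply/eqP/eq_bigr => p _.
by rewrite horner_deriv_bern_SS; ring.
Qed.

Let momentE k : (k < c)%N -> m k = m 0 / k.+1%:R.
Proof.
elim: k => [|k IHk] kc; first by rewrite divr1.
apply: (mulfI (_ : k.+2%:R != 0)); first by rewrite pnatr_eq0.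
by rewrite -moment_rec // IHk ?(ltnW kc) //; field; rewrite nat1r -natrD !pnatr_eq0.
Qed.

Lemma sum_horner_uniform (G : {poly R}) : (size G <= c)%N ->
  \sum_(p <- s) u p * G.[p] = (\sum_(p <- s) u p) * int01 G.
Proof.
move=> sGc; have -> : \sum_(p <- s) u p = m 0 by apply: eq_bigr => p _; rewrite mulr1.
under eq_bigr do rewrite horner_coef mulr_sumr.
rewrite exchange_big /int01 mulr_sumr; apply: eq_bigr => i _.
rewrite mulrCA -(momentE (leq_trans (ltn_ord i) sGc)) /m mulr_sumr.
by apply: eq_bigr => p _; ring.
Qed.

End UniformMoments.

Section Quadrature.
Variable R : realType.

Lemma QS_sum_horner d (w : R -> R) (F : {poly R}) : QS d w -> (size F <= d.+1)%N ->
  \sum_(x \in supp w) w x * F.[x] = 2 * int01 (F \Po to11).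
Proof.
by case=> _ [_ [_ exact_deg]] sFd; apply: EFin_inj; rewrite -integral_poly exact_deg.
Qed.

Lemma QS_le d e (w : R -> R) : (d <= e)%N -> QS e w -> QS d w.
Proof.
move=> de [w_fin [w_ge0 [w_range exact_deg]]]; do 3!split=> //.
by move=> F sFd; rewrite exact_deg // (leq_trans sFd).
Qed.

End Quadrature.

Section QuadratureToBias.
Variables (R : realType) (w : R -> R).
Hypothesis w_QS : QS 0 w.

Let w_fin : finite_set (supp w). Proof. by case: w_QS. Qed.
Let w_ge0 x : 0 <= w x. Proof. by case: w_QS => _ []. Qed.
Let w_range x : w x != 0 -> -1 < x < 1.
Proof. by case: w_QS => _ [_ [w_rng _]]; exact: w_rng. Qed.

Let w_sum : \sum_(x \in supp w) w x = 2.
Proof.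
have := QS_sum_horner (F := 1) w_QS; rewrite size_poly1 -polyC1 comp_polyC int01C.
by rewrite mulr1 => <- //; apply: eq_fsbigr => x _; rewrite hornerC mulr1.
Qed.

Let sqrt_gt0 x : w x != 0 -> 0 < Num.sqrt (1 - x ^+ 2).
Proof. by move=> /w_range /andP[? ?]; rewrite sqrtr_gt0; nra. Qed.

Let C := \sum_(x \in supp w) w x / Num.sqrt (1 - x ^+ 2).

Let C_gt0 : 0 < C.
Proof.
apply: fsum_gt0 => [//||x wx].
  by apply: (fsum_neq0_nonempty (F := w)); rewrite w_sum.
by rewrite divr_gt0 ?sqrt_gt0 // lt_def wx w_ge0.
Qed.

Let P := PofQ w.

Let P_to01 x : P to01.[x] = w x / (C * Num.sqrt (1 - x ^+ 2)).
Proof. by rewrite /P /PofQ /= -to11E to01K. Qed.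

Let supp_P : supp P = horner to01 @` supp w.
Proof.
apply: (supp_can (@to01K R) (@to11K R)) => x; rewrite P_to01.
have [->|wx] := eqVneq (w x) 0; first by rewrite mul0r !eqxx.
by rewrite mulf_eq0 invr_eq0 mulf_eq0 (negPf wx) gt_eqF ?gt_eqF ?sqrt_gt0.
Qed.

Let sum_P (F : R -> R) : \sum_(p \in supp P) F p = \sum_(x \in supp w) F to01.[x].
Proof. by rewrite supp_P (fsbig_can _ _ (@to01K R)). Qed.

Let sqrt_to01 (x : R) : Num.sqrt (to01.[x] * (1 - to01.[x])) = Num.sqrt (1 - x ^+ 2) / 2.
Proof. by rewrite sqrtr_one_sub_sqr to01E; field. Qed.

Let to01_range y : w y != 0 -> 0 < to01.[y] < 1.
Proof. by move=> /w_range /andP[? ?]; rewrite to01E; apply/andP; split; lra. Qed.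

Let P_range p : P p != 0 -> 0 < p < 1.
Proof.
rewrite -(to11K p) P_to01 => Pp; apply: to01_range.
by apply: contraNneq Pp => ->; rewrite mul0r.
Qed.

Lemma PofQ_bias_dist : (forall x, w (- x) = w x) -> bias_dist P.
Proof.
move=> w_sym; split; first by rewrite supp_P; exact: finite_image.
split.
  by move=> p; rewrite /P /PofQ /= divr_ge0 // mulr_ge0 ?sqrtr_ge0 ?(ltW C_gt0).
split; first exact: P_range.
split.
  rewrite sum_P; under eq_fsbigr => x _ do rewrite P_to01 invfM mulrCA.
  by rewrite -mulr_fsumr mulVf ?gt_eqF.
move=> a; rewrite /P /PofQ /= (_ : 2 * (1 - a) - 1 = - (2 * a - 1)); last by ring.
by rewrite w_sym sqrrN.
Qed.

Lemma PofQ_c_indist c : symQS c.-1 w -> c_indist c P.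
Proof.
case=> w_QSc w_sym; apply/c_indistP; split=> [|l x /andP[l_gt1 lc] x_range].
  exact: PofQ_bias_dist.
have xl : (x <= l)%N by case/andP: x_range => _ /ltnW.
rewrite /Ep sum_P.
transitivity (\sum_(y \in supp w) (2 * C)^-1 * (w y * ((bern l x)^`() \Po to01).[y])).
  apply: eq_fsbigr => y /set_mem wy.
  rewrite P_to01 fbias_bern ?to01_range // sqrt_to01 horner_comp.
  by field; rewrite !gt_eqF ?sqrt_gt0.
rewrite -mulr_fsumr (QS_sum_horner w_QSc); last first.
  rewrite size_comp_to01 prednK ?(leq_trans (ltnW l_gt1) lc) //.
  exact: leq_trans (size_deriv_bern _ xl) lc.
by rewrite -comp_polyA to01_to11 comp_polyXr int01_deriv_bern // !mulr0.
Qed.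

Lemma QofPofQ : QofP P = w.
Proof.
have C'E : \sum_(p \in supp P) Num.sqrt (p * (1 - p)) * P p / 2 = (2 * C)^-1.
  rewrite sum_P (eq_fsbigr (fun x => (4 * C)^-1 * w x)) => [|x /set_mem wx].
    by rewrite -mulr_fsumr w_sum; field; rewrite gt_eqF.
  by rewrite sqrt_to01 P_to01; field; rewrite !gt_eqF ?sqrt_gt0.
apply/funext => x; rewrite /QofP /= C'E -to01E sqrt_to01 P_to01.
have [->|wx] := eqVneq (w x) 0; first by rewrite !(mul0r, mulr0).
by field; rewrite !gt_eqF ?sqrt_gt0.
Qed.

End QuadratureToBias.

Section BiasToQuadrature.
Variables (R : realType) (P : R -> R).
Hypothesis P_bias : bias_dist P.

Let P_fin : finite_set (supp P). Proof. by case: P_bias. Qed.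
Let P_ge0 p : 0 <= P p. Proof. by case: P_bias => _ []. Qed.
Let P_range p : P p != 0 -> 0 < p < 1.
Proof. by case: P_bias => _ [_ [P_rng _]]; exact: P_rng. Qed.
Let P_sum : \sum_(p \in supp P) P p = 1. Proof. by case: P_bias => _ [_ [_ []]]. Qed.
Let P_sym a : P (1 - a) = P a. Proof. by case: P_bias => _ [_ [_ [_ ->]]]. Qed.

Let sqrt_gt0 p : P p != 0 -> 0 < Num.sqrt (p * (1 - p)).
Proof. by move=> /P_range /andP[? ?]; rewrite sqrtr_gt0 mulr_gt0 ?subr_gt0. Qed.

Let u p := P p * Num.sqrt (p * (1 - p)).
Let M := \sum_(p \in supp P) u p.

Let M_gt0 : 0 < M.
Proof.
apply: fsum_gt0 => [//||p Pp].
  by apply: (fsum_neq0_nonempty (F := P)); rewrite P_sum.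
by rewrite mulr_gt0 ?sqrt_gt0 // lt_def Pp P_ge0.
Qed.

Let Q := QofP P.

Let Q_to11 p : Q to11.[p] = 2 * u p / M.
Proof.
have C'E : \sum_(p \in supp P) Num.sqrt (p * (1 - p)) * P p / 2 = M / 2.
  by rewrite mulr_fsuml; apply: eq_fsbigr => q _; rewrite /u [_ * P q]mulrC.
by rewrite /Q /QofP /= C'E -to01E to11K /u; field; rewrite gt_eqF.
Qed.

Let supp_Q : supp Q = horner to11 @` supp P.
Proof.
apply: (supp_can (@to11K R) (@to01K R)) => p; rewrite Q_to11 /u.
have [->|Pp] := eqVneq (P p) 0; first by rewrite !mul0r mulr0 !mul0r !eqxx.
by rewrite !mulf_eq0 invr_eq0 (negPf Pp) !gt_eqF ?sqrt_gt0.
Qed.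

Let sum_Q (F : R -> R) : \sum_(x \in supp Q) F x = \sum_(p \in supp P) F to11.[p].
Proof. by rewrite supp_Q (fsbig_can _ _ (@to11K R)). Qed.

Let sqrt_to11 (p : R) : Num.sqrt (1 - to11.[p] ^+ 2) = 2 * Num.sqrt (p * (1 - p)).
Proof. by rewrite sqrtr_one_sub_sqr -to01E to11K. Qed.

Let sum_horner c (G : {poly R}) : c_indist c P -> (size G <= c.-1.+1)%N ->
  \sum_(p \in supp P) u p * G.[p] = M * int01 G.
Proof.
move=> /c_indistP[_ Ep0]; rewrite /M !fsbig_finite //.
apply: sum_horner_uniform => a ac; have {}ac : (a.+2 <= c)%N by case: c ac Ep0.
rewrite -[RHS](Ep0 a.+2 a.+1) ?ac ?ltnSn // /Ep fsbig_finite //.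
apply: eq_big_seq => p; rewrite in_fset_set // inE => Pp.
by rewrite fbias_bern ?(P_range Pp) // mulrA.
Qed.

Lemma QofP_symQS c : c_indist c P -> symQS c.-1 Q.
Proof.
move=> P_indist; split; last first.
  move=> x; rewrite /Q /QofP /= (_ : (1 + - x) / 2 = 1 - (1 + x) / 2); last by field.
  by rewrite P_sym; congr (Num.sqrt _ * _ / _); ring.
split; first by rewrite supp_Q; exact: finite_image.
split.
  move=> x; rewrite -(to01K x) Q_to11 divr_ge0 ?(ltW M_gt0) // mulr_ge0 //.
  by rewrite /u mulr_ge0 ?sqrtr_ge0.
split.
  move=> x; rewrite -(to01K x) Q_to11 => Qx; have /P_range : P to01.[x] != 0.
    by apply: contraNneq Qx; rewrite /u => ->; rewrite !mul0r mulr0 mul0r.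
  by rewrite to01E to11E => /andP[? ?]; apply/andP; split; lra.
move=> F sFc; rewrite integral_poly sum_Q; congr (_%:E).
rewrite (eq_fsbigr (fun p => 2 / M * (u p * (F \Po to11).[p]))) => [|p _].
  by rewrite -mulr_fsumr (sum_horner P_indist) ?size_comp_to11 //; field; rewrite gt_eqF.
by rewrite Q_to11 horner_comp; ring.
Qed.

Lemma PofQofP : PofQ Q = P.
Proof.
have CE : \sum_(x \in supp Q) Q x / Num.sqrt (1 - x ^+ 2) = M^-1.
  rewrite sum_Q (eq_fsbigr (fun p => M^-1 * P p)) => [|p /set_mem Pp].
    by rewrite -mulr_fsumr P_sum mulr1.
  by rewrite Q_to11 sqrt_to11 /u; field; rewrite !gt_eqF ?sqrt_gt0.
apply/funext => p; rewrite /PofQ /= CE -to11E Q_to11 sqrt_to11.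
rewrite /u; have [->|Pp] := eqVneq (P p) 0; first by rewrite !(mul0r, mulr0).
by field; rewrite !gt_eqF ?sqrt_gt0.
Qed.

End BiasToQuadrature.

Theorem theorem1 (R : realType) (c : nat) (hc : (1 <= c)%N) :
  (forall w : R -> R, symQS c.-1 w ->
     c_indist c (PofQ w) /\ QofP (PofQ w) = w) /\
  (forall P : R -> R, c_indist c P ->
     symQS c.-1 (QofP P) /\ PofQ (QofP P) = P).
Proof.
split=> [w w_symQS | P P_indist].
  have w_QS0 : QS 0 w := QS_le (leq0n _) w_symQS.1.
  by split; [exact: (PofQ_c_indist w_QS0 w_symQS) | exact: QofPofQ].
by split; [exact: (QofP_symQS P_indist.1 P_indist) | exact: (PofQofP P_indist.1)].
Qed.
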